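(* Let $s\ge2$ and $n\ge1$ be integers and $r_\pm=s\left(1\pm\sqrt{1-1/s}\right)$. Then $$\dim\ker(H_n^s)=\sum_{k=0}^n|T_k|=\frac{r_+^{n+1}+r_-^{n+1}-2}{2(s-1)},$$ and asymptotically $\dim\ker(H_n^s)\approx r_+^{n+1}/[2(s-1)]$ (the ratio tends to $1$ as $n\to\infty$).
   Context: Let $\Sigma=\{-s,\dots,s\}$, $\Sigma_*=\Sigma\setminus\{0\}$. The spin chain on $n$ sites has local space $\mathbb{C}^{2s+1}$ with basis $\{|j\rangle:j\in\Sigma\}$. For $m\in\Sigma_*$, $P^m=|\phi_m\rangle\langle\phi_m|$ with $|\phi_m\rangle=\frac1{\sqrt2}(|0,m\rangle-|m,0\rangle)$; for $m\in\{1,\dots,s\}$, $Q^m=|\chi_m\rangle\langle\chi_m|$ with $|\chi_m\rangle=\frac1{\sqrt2}(|0,0\rangle-|m,-m\rangle)$, acting on two neighboring spins. $H_n^s=\sum_{k=1}^{n-1}\big(\sum_{m\in\Sigma_*}P^m_{k,k+1}+\sum_{m=1}^sQ^m_{k,k+1}\big)$. For $k\ge0$, $T_k\subseteq\Sigma_*^k$ is the set of strings $t_1\cdots t_k$ with no index $j$ such that $t_j=m\in\{1,\dots,s\}$ and $t_{j+1}=-m$ ($T_0$ consists of the empty string). *)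

From HB Require Import structures.
From mathcomp Require Import all_boot all_order all_algebra.
From mathcomp Require Import algC.
Set Implicit Arguments. Unset Strict Implicit. Unset Printing Implicit Defensive.
Import Order.TTheory GRing.Theory Num.Theory.
Local Open Scope ring_scope.

(* Local basis |j>, j in Sigma = {-s..s}, indexed by 'I_(2s+1): index i <-> spin i - s *)
Definition spin (s : nat) (i : 'I_(2 * s + 1)) : int := (i : nat)%:Z - s%:Z.

(* configurations of n spins (basis of (C^(2s+1))^{(x) n}) *)
Definition conf (s n : nat) := {ffun 'I_n -> 'I_(2 * s + 1)}.

(* |phi_m> = (|0,m> - |m,0>)/sqrt 2, as a function of the two-site basis label (a,b) *)
Definition phiv (m a b : int) : algC :=
  (sqrtC 2)^-1 * (((a == 0) && (b == m))%:R - ((a == m) && (b == 0))%:R).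
(* |chi_m> = (|0,0> - |m,-m>)/sqrt 2 *)
Definition chiv (m a b : int) : algC :=
  (sqrtC 2)^-1 * (((a == 0) && (b == 0))%:R - ((a == m) && (b == - m))%:R).

(* matrix element <a,b| h |c,d> of the two-site interaction
   h = sum_{m in Sigma_*} P^m + sum_{m=1}^s Q^m *)
Definition hloc (s : nat) (a b c d : int) : algC :=
  \sum_(i : 'I_(2 * s + 1) | spin i != 0) phiv (spin i) a b * (phiv (spin i) c d)^*
  + \sum_(m < s) chiv (m.+1)%:Z a b * (chiv (m.+1)%:Z c d)^*.

(* matrix element <x| H_n^s |y>: sum over neighbouring pairs (k, k+1) *)
Definition Hentry (s n : nat) (x y : conf s n) : algC :=
  \sum_(k : 'I_n) \sum_(k' : 'I_n | (k' : nat) == k.+1)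
    ([forall l : 'I_n, ((l != k) && (l != k')) ==> (x l == y l)])%:R
    * hloc s (spin (x k)) (spin (x k')) (spin (y k)) (spin (y k')).

Definition Hmat (s n : nat) : 'M[algC]_(#|conf s n|) :=
  \matrix_(i, j) Hentry (enum_val i) (enum_val j).

(* dim ker H_n^s : dimension of {v column vector | H v = 0} *)
Definition dimker (s n : nat) : nat := \rank (kermx (Hmat s n)^T).

(* T_k : strings in Sigma_*^k with no j such that t_j = m in {1..s}, t_{j+1} = -m *)
Definition Tset (s k : nat) : {set {ffun 'I_k -> 'I_(2 * s + 1)}} :=
  [set t : {ffun 'I_k -> 'I_(2 * s + 1)} | [forall j : 'I_k, spin (t j) != 0] &&
           [forall j : 'I_k, forall j' : 'I_k,
              ((j' : nat) == j.+1) ==> ~~ ((0 < spin (t j)) && (spin (t j') == - spin (t j)))]].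

Definition rplus (s : nat) : algC := s%:R * (1 + sqrtC (1 - (s%:R)^-1)).
Definition rminus (s : nat) : algC := s%:R * (1 - sqrtC (1 - (s%:R)^-1)).

From HB Require Import structures.
From mathcomp Require Import all_boot all_order all_algebra.
From mathcomp Require Import algC.
From mathcomp Require Import ring zify.
Set Implicit Arguments. Unset Strict Implicit. Unset Printing Implicit Defensive.
Import Order.TTheory GRing.Theory Num.Theory.
Local Open Scope ring_scope.

(* H_n^s is a sum of rank-one projectors, so by positivity of <psi, H psi> a vector
   psi lies in the kernel iff every projector annihilates it, i.e. iff psi takes equal
   values on configurations related by a move 0m <-> m0 or 00 <-> m(-m), m > 0, on two
   neighbouring sites. Deleting the zeros and then cancelling adjacent pairs m(-m)
   gives a normal form, a string of T_k with k <= n, which is a complete invariant of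
   the moves; the kernel thus has one basis vector per normal form. Counting the
   letters that may be prepended to a string of T_k gives
   |T_(k+2)| = 2s |T_(k+1)| - s |T_k|, whose characteristic roots are r_+ and r_-;
   the closed form and the asymptotics follow from r_+ >= 2 and 0 <= r_- <= 1. *)

Lemma linrec2_eq (R : pzRingType) (p q : R) (u v : nat -> R) :
  u 0%N = v 0%N -> u 1%N = v 1%N ->
  (forall k, u k.+2 = p * u k.+1 - q * u k) ->
  (forall k, v k.+2 = p * v k.+1 - q * v k) ->
  u =1 v.
Proof.
move=> e0 e1 ru rv; suff uv k : u k = v k /\ u k.+1 = v k.+1 by move=> k; case: (uv k).
by elim: k => [|k [IH1 IH2]] //; split=> //; rewrite ru rv IH1 IH2.
Qed.

Lemma powersum_rec2 (R : comPzRingType) (a b : R) k :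
  a ^+ k.+2 + b ^+ k.+2 = (a + b) * (a ^+ k.+1 + b ^+ k.+1) - a * b * (a ^+ k + b ^+ k).
Proof. by rewrite !exprS; ring. Qed.

Lemma small_over_pow2 (R : archiNumFieldType) (a C eps : R) (c : nat -> R) :
  2 <= a -> (forall n, `|c n| <= C) -> 0 < eps ->
  exists N, forall n, (N <= n)%N -> `|c n / a ^+ n| < eps.
Proof.
move=> a2 cC eps0; have C0 : 0 <= C := le_trans (normr_ge0 _) (cC 0%N).
have a0 : 0 < a by apply: lt_le_trans a2.
exists (Num.Def.archi_bound (C / eps)) => n Nn.
have an0 : 0 < a ^+ n by rewrite exprn_gt0.
rewrite normrM normfV (gtr0_norm an0) ltr_pdivrMr //.
apply: le_lt_trans (cC n) _; rewrite -ltr_pdivrMl // mulrC.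
apply: lt_le_trans (archi_boundP (divr_ge0 C0 (ltW eps0))) _.
apply: (le_trans (y := n%:R)); first by rewrite ler_nat.
apply: (le_trans (y := 2 ^+ n)); first by rewrite -natrX ler_nat ltnW // ltn_expl.
by rewrite lerXn2r // ?nnegrE ?ler0n // ltW.
Qed.

Section Roots.

Variable s : nat.
Hypothesis s_ge2 : (2 <= s)%N.

Let s_gt0 : (0 : algC) < s%:R. Proof. by rewrite ltr0n; case: s s_ge2. Qed.
Let sqrt_sq : sqrtC (1 - (s%:R)^-1) ^+ 2 = 1 - (s%:R : algC)^-1.
Proof. by rewrite sqrtCK. Qed.

Lemma rplus_add_rminus : rplus s + rminus s = 2 * s%:R.
Proof. by rewrite /rplus /rminus; ring. Qed.

Lemma rplus_mul_rminus : rplus s * rminus s = s%:R.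
Proof.
rewrite /rplus /rminus.
have -> : forall x : algC, s%:R * (1 + x) * (s%:R * (1 - x)) = s%:R * s%:R * (1 - x ^+ 2).
  by move=> x; ring.
by rewrite sqrt_sq opprB addrC subrK mulrK // unitf_gt0.
Qed.

Let radicand_ge0 : 0 <= 1 - (s%:R : algC)^-1.
Proof. by rewrite subr_ge0 invf_le1 // ler1n; case: s s_ge2. Qed.
Let sqrt_ge0 : 0 <= sqrtC (1 - (s%:R : algC)^-1). Proof. by rewrite sqrtC_ge0. Qed.
Let sqrt_le1 : sqrtC (1 - (s%:R : algC)^-1) <= 1.
Proof.
by rewrite -[leRHS]sqrtC1 ler_sqrtC ?nnegrE ?ler01 // lerBlDr lerDl invr_ge0 ltW.
Qed.

Lemma rplus_ge : s%:R <= rplus s.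
Proof. by rewrite ler_pMr // lerDl. Qed.

Lemma rplus_ge2 : 2 <= rplus s.
Proof. by apply: le_trans rplus_ge; rewrite (ler_nat _ 2 s). Qed.

Lemma rminus_ge0 : 0 <= rminus s.
Proof. by rewrite mulr_ge0 ?ler0n // subr_ge0. Qed.

Lemma rminus_le1 : rminus s <= 1.
Proof.
have /ler_pM2l <- : 0 < rplus s by apply: lt_le_trans rplus_ge2.
by rewrite rplus_mul_rminus mulr1 rplus_ge.
Qed.

Let denom_neq0 : (2 * (s%:R - 1) : algC) != 0.
Proof. by rewrite mulf_neq0 ?pnatr_eq0 // subr_eq0 pnatr_eq1 gtn_eqF. Qed.

Lemma sum_linrec2_closed_form (g : nat -> nat) :
  g 0%N = 1%N -> g 1%N = (2 * s)%N ->
  (forall k, g k.+2 + s * g k = 2 * s * g k.+1)%N ->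
  forall n, ((\sum_(k < n.+1) g k)%N%:R : algC)
     = (rplus s ^+ n.+1 + rminus s ^+ n.+1 - 2) / (2 * (s%:R - 1)).
Proof.
move=> g0 g1 grec n; pose psum j := rplus s ^+ j + rminus s ^+ j.
have psum_rec k : psum k.+2 = 2 * s%:R * psum k.+1 - s%:R * psum k.
  by rewrite /psum powersum_rec2 rplus_add_rminus rplus_mul_rminus.
have g_psum : (fun k => (g k)%:R * (2 * (s%:R - 1))) =1 (fun k => psum k.+1 - psum k).
  apply: (linrec2_eq (p := 2 * s%:R) (q := s%:R)) => [||k|k] /=.
  - by rewrite g0 /psum !expr0 !expr1 rplus_add_rminus; ring.
  - rewrite g1 (psum_rec 0%N) /psum !expr0 !expr1 rplus_add_rminus natrM; ring.
  - have /(congr1 (fun m => m%:R : algC)) := grec k; rewrite !natrD !natrM => e.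
    by rewrite -[(g k.+2)%:R](addrK ((s%:R) * (g k)%:R)) e; ring.
  - by rewrite !psum_rec; ring.
apply: (mulIf denom_neq0); rewrite mulfVK // natr_sum mulr_suml.
under eq_bigr do rewrite g_psum.
by rewrite -(big_mkord xpredT (fun k => psum k.+1 - psum k)) telescope_sumr.
Qed.

Lemma closed_form_ratio_cvg (eps : algC) : 0 < eps ->
  exists N, forall n, (N <= n)%N ->
  `|(rplus s ^+ n.+1 + rminus s ^+ n.+1 - 2) / (2 * (s%:R - 1))
      / (rplus s ^+ n.+1 / (2 * (s%:R - 1))) - 1| < eps.
Proof.
move=> eps0; have rm_bound n : `|rminus s ^+ n - 2| <= 3.
  apply: le_trans (ler_normB _ _) _; rewrite normrX !ger0_norm ?rminus_ge0 ?ler0n //.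
  by rewrite (_ : 3 = 1 + 2) // lerD2r exprn_ile1 ?rminus_ge0 ?rminus_le1.
have [N HN] := small_over_pow2 rplus_ge2 rm_bound eps0.
exists N => n Nn; have rp0 : rplus s ^+ n.+1 != 0.
  by rewrite expf_neq0 // gt_eqF // (lt_le_trans _ rplus_ge2).
rewrite invf_div mulrA (divfK denom_neq0) -[X in _ - X](divff rp0) -mulrBl.
have -> : forall a b c : algC, a + b - c - a = b - c by move=> *; ring.
by apply: HN; apply: leqW.
Qed.

End Roots.

Notation letter s := 'I_(2 * s + 1).

Section Words.

Variable s : nat.
Implicit Types (a b c d : letter s) (w : seq (letter s)).

Lemma spin_inj : injective (@spin s).
Proof. by move=> a b /eqP; rewrite /spin -subr_eq0 opprB addrA subrK subr_eq0 => /eqP[] /val_inj. Qed.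

Fact spin0_subproof : (s < 2 * s + 1)%N. Proof. lia. Qed.
Definition spin0 : letter s := Ordinal spin0_subproof.

Lemma spin_spin0 : spin spin0 = 0.
Proof. exact: subrr. Qed.

Lemma spin_eq0 a : (spin a == 0) = (a == spin0).
Proof. by rewrite -spin_spin0 (inj_eq spin_inj). Qed.

Lemma spin_lt0 a : (spin a < 0) = (a < s)%N.
Proof. by rewrite /spin subr_lt0 ltz_nat. Qed.

Lemma spin_gt0 a : (0 < spin a) = (s < a)%N.
Proof. by rewrite /spin subr_gt0 ltz_nat. Qed.

Fact opp_letter_subproof c : (2 * s - c < 2 * s + 1)%N. Proof. lia. Qed.
Definition opp_letter c : letter s := Ordinal (opp_letter_subproof c).

Lemma spin_opp_letter c : spin (opp_letter c) = - spin c.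
Proof.
rewrite /spin /=; have := ltn_ord c => c_lt; rewrite -subzn; last by lia.
rewrite opprB; lia.
Qed.

Fact pos_letter_subproof (j : 'I_s) : (s + j.+1 < 2 * s + 1)%N.
Proof. by have := ltn_ord j; lia. Qed.
Definition pos_letter (j : 'I_s) : letter s := Ordinal (pos_letter_subproof j).

Lemma spin_pos_letter (j : 'I_s) : spin (pos_letter j) = (j.+1)%:Z.
Proof. rewrite /spin /=; lia. Qed.

Definition nonzero c : bool := spin c != 0.

(* (a, b) = (m, -m) with m > 0: the pairs on which |chi_m> is supported. *)
Definition cancels a b : bool := (0 < spin a) && (spin b == - spin a).

Lemma nonzero_spin0 : nonzero spin0 = false.
Proof. by rewrite /nonzero spin_spin0 eqxx. Qed.

Lemma cancels_nonzero a b : cancels a b -> nonzero a && nonzero b.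
Proof. by rewrite /nonzero => /andP[a_gt0 /eqP->]; rewrite oppr_eq0 andbb gt_eqF. Qed.

Lemma cancels_next a b c : cancels a b -> ~~ cancels b c.
Proof. by rewrite {2}/cancels => /andP[a_gt0 /eqP->]; rewrite oppr_gt0 ltNge ltW. Qed.

Lemma cancels_pos_letter (j : 'I_s) : cancels (pos_letter j) (opp_letter (pos_letter j)).
Proof. by rewrite /cancels spin_opp_letter spin_pos_letter eqxx. Qed.

Lemma cancelsP a b : cancels a b -> exists j, a = pos_letter j /\ b = opp_letter (pos_letter j).
Proof.
move=> ab; have /andP[] := ab; rewrite spin_gt0 => a_gt /eqP b_opp.
have j_lt : (a - s.+1 < s)%N by have := ltn_ord a; lia.
have a_pos : a = pos_letter (Ordinal j_lt) by apply: val_inj => /=; lia.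
by exists (Ordinal j_lt); split=> //; apply: spin_inj; rewrite spin_opp_letter b_opp {1}a_pos.
Qed.

Definition reduced w : bool := all nonzero w && sorted (fun a b => ~~ cancels a b) w.

Definition push a w : seq (letter s) :=
  if w is d :: r then (if cancels a d then r else a :: w) else [:: a].

Definition reduce w := foldr push [::] w.

Definition nf w := reduce (filter nonzero w).

Definition canonical w := nf w ++ nseq (size w - size (nf w)) spin0.

Lemma reduced_cons c w :
  reduced (c :: w) = [&& nonzero c, reduced w & if w is d :: _ then ~~ cancels c d else true].
Proof.
rewrite /reduced /=; case: w => [|d w] /=; first by rewrite !andbT.
by case: (nonzero c); case: (nonzero d); case: (all _ w); case: (cancels c d); case: (path _ d w).
Qed.

Lemma size_push a w : (size (push a w) <= (size w).+1)%N.
Proof. by case: w => //= d r; case: ifP => //= _; lia. Qed.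

Lemma size_reduce w : (size (reduce w) <= size w)%N.
Proof. by elim: w => //= a w IH; apply: leq_trans (size_push _ _) _. Qed.

Lemma reduce_cat w1 w2 : reduce (w1 ++ w2) = foldr push (reduce w2) w1.
Proof. exact: foldr_cat. Qed.

Lemma reduce_cancel a b w : cancels a b -> reduce [:: a, b & w] = reduce w.
Proof.
move=> ab; rewrite /reduce /=; case: (foldr push [::] w) => [|d r] /=; first by rewrite ab.
by rewrite (negbTE (cancels_next _ ab)) /= ab.
Qed.

Lemma reduced_push a w : nonzero a -> reduced w -> reduced (push a w).
Proof.
move=> na; case: w => [|d r] rw; first by rewrite /reduced /= na.
rewrite /=; case: ifP => ad; first by move: rw; rewrite reduced_cons => /and3P[].
by rewrite reduced_cons na rw ad.
Qed.

Lemma reduced_reduce w : all nonzero w -> reduced (reduce w).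
Proof. by elim: w => //= a w IH /andP[na /IH]; apply: reduced_push. Qed.

Lemma reduce_id w : reduced w -> reduce w = w.
Proof.
elim: w => //= a w IH; rewrite reduced_cons => /and3P[_ rw aw].
by rewrite IH //; case: w aw {IH rw} => //= d w /negbTE->.
Qed.

Lemma reduced_nf w : reduced (nf w).
Proof. exact/reduced_reduce/filter_all. Qed.

Lemma nf_id w : reduced w -> nf w = w.
Proof. by move=> rw; rewrite /nf (all_filterP (proj1 (andP rw))) reduce_id. Qed.

Lemma nf_cons a w : nf (a :: w) = if nonzero a then push a (nf w) else nf w.
Proof. by rewrite /nf /=; case: ifP. Qed.

Lemma nf_cat w1 w2 : nf (w1 ++ w2) = foldr push (nf w2) (filter nonzero w1).
Proof. by rewrite /nf filter_cat reduce_cat. Qed.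

Lemma nf_nseq0 w k : nf (w ++ nseq k spin0) = nf w.
Proof. by rewrite /nf filter_cat filter_nseq nonzero_spin0 cats0. Qed.

Lemma size_nf w : (size (nf w) <= size w)%N.
Proof. by apply: leq_trans (size_reduce _) _; rewrite size_filter count_size. Qed.

Lemma size_canonical w : size (canonical w) = size w.
Proof. by rewrite size_cat size_nseq subnKC ?size_nf. Qed.

Lemma nf_canonical w : nf (canonical w) = nf w.
Proof. by rewrite nf_nseq0 nf_id ?reduced_nf. Qed.

End Words.

Lemma sum_nat_of_bool (T : finType) (P : pred T) : (\sum_(t : T) P t)%N = #|P|.
Proof. by rewrite -sum1_card [RHS]big_mkcond; apply: eq_bigr => t _; rewrite unfold_in; case: (P t). Qed.

Lemma sum_tuple_cons (T : finType) (k : nat) (F : k.+1.-tuple T -> nat) :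
  (\sum_(t : k.+1.-tuple T) F t = \sum_(c : T) \sum_(t : k.-tuple T) F [tuple of c :: t])%N.
Proof.
rewrite pair_big /= (reindex (fun p : T * k.-tuple T => [tuple of p.1 :: p.2])) //=.
exists (fun t : k.+1.-tuple T => (thead t, [tuple of behead t])).
  by move=> [c t] _ /=; congr (_, _); apply: val_inj.
by move=> t _; apply: val_inj => /=; rewrite [in RHS](tuple_eta t).
Qed.

Lemma card_ord_lt (m k : nat) : (k <= m)%N -> #|[pred i : 'I_m | (i < k)%N]| = k.
Proof.
move=> km; rewrite cardE /enum_mem -enumT size_filter.
rewrite -(count_map val (fun i => (i < k)%N)) val_enum_ord -size_filter.
by rewrite (filter_iota_ltn 0 km) size_iota.
Qed.

Section Counting.

Variable s : nat.
Implicit Types (c d : letter s) (w : seq (letter s)).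

Lemma card_spin_neg : #|[pred c : letter s | spin c < 0]| = s.
Proof.
rewrite (eq_card (B := [pred c : letter s | (c < s)%N])) => [|c]; last by rewrite !inE spin_lt0.
by rewrite card_ord_lt //; lia.
Qed.

Lemma card_nonzero : #|[pred c : letter s | nonzero c]| = (2 * s)%N.
Proof.
rewrite (eq_card (B := predC1 (spin0 s))) ?cardC1 ?card_ord ?addn1 // => c.
by rewrite !inE /nonzero spin_eq0.
Qed.

Lemma card_cancels d : #|[pred c : letter s | cancels c d]| = (spin d < 0)%R.
Proof.
case: ltP => [d_neg|d_nneg].
  rewrite (eq_card (B := pred1 (opp_letter d))) ?card1 // => c; rewrite !inE.
  apply/andP/eqP => [[_ /eqP dc]|->]; last by rewrite spin_opp_letter oppr_gt0 opprK.
  by apply: spin_inj; rewrite spin_opp_letter dc opprK.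
apply: eq_card0 => c; rewrite !inE; apply/andP => -[c_pos /eqP dc].
by move: d_nneg; rewrite dc oppr_ge0 leNgt c_pos.
Qed.

Lemma card_compatible d :
  (#|[pred c : letter s | nonzero c && ~~ cancels c d]| + ((spin d < 0)%R : nat) = 2 * s)%N.
Proof.
rewrite -card_cancels -[RHS]card_nonzero -[RHS](cardID [pred c | cancels c d]) [LHS]addnC.
congr (_ + _)%N; apply: eq_card => c; rewrite !inE /=; last by rewrite andbC.
by case cd: (cancels c d); rewrite ?andbT ?andbF //; case/andP: (cancels_nonzero cd).
Qed.

Definition head_neg (w : seq (letter s)) : bool := if w is d :: _ then spin d < 0 else false.

Definition nreduced k := (\sum_(t : k.-tuple (letter s)) reduced t)%N.
Definition nreduced_neg k := (\sum_(t : k.-tuple (letter s)) reduced t && head_neg t)%N.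

Lemma card_reduced_cons w : reduced w ->
  (#|[pred c | reduced (c :: w)]| + head_neg w = 2 * s)%N.
Proof.
move=> rw; case: w rw => [|d w] rw.
  by rewrite addn0 -[RHS]card_nonzero; apply: eq_card => c; rewrite !inE reduced_cons /= andbT.
rewrite -[RHS](card_compatible d); congr (_ + _)%N; apply: eq_card => c.
by rewrite !inE reduced_cons rw.
Qed.

Lemma nreducedS k : (nreduced k.+1 + nreduced_neg k = 2 * s * nreduced k)%N.
Proof.
rewrite /nreduced /nreduced_neg sum_tuple_cons exchange_big -big_split big_distrr /=.
apply: eq_bigr => t _; case rt: (reduced t); last first.
  by rewrite muln0 andFb addn0 big1 // => c _; rewrite reduced_cons rt andbF.
by rewrite muln1 -[RHS](card_reduced_cons rt) sum_nat_of_bool.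
Qed.

Lemma nreduced_negS k : nreduced_neg k.+1 = (s * nreduced k)%N.
Proof.
rewrite /nreduced_neg sum_tuple_cons -[in RHS]card_spin_neg -sum_nat_of_bool big_distrl /=.
apply: eq_bigr => c _; rewrite big_distrr /=; apply: eq_bigr => t _ /=.
case: ltP => c_neg; last by rewrite andbF.
have c_nz : nonzero c by rewrite /nonzero lt_eqF.
have c_nc d : ~~ cancels c d by rewrite /cancels ltNge ltW.
by rewrite reduced_cons c_nz andbT mul1n; case: (tval t) => [|d w]; rewrite ?c_nc ?andbT.
Qed.

Lemma nreduced0 : nreduced 0 = 1%N.
Proof.
by rewrite /nreduced (eq_bigr (fun=> 1%N)) ?sum_nat_const ?card_tuple // => t _; rewrite tuple0.
Qed.

Lemma nreduced1 : nreduced 1 = (2 * s)%N.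
Proof.
have := nreducedS 0; rewrite nreduced0 muln1 /nreduced_neg big1 ?addn0 // => t _.
by rewrite tuple0.
Qed.

Lemma nreduced_rec k : (nreduced k.+2 + s * nreduced k = 2 * s * nreduced k.+1)%N.
Proof. by rewrite -nreduced_negS nreducedS. Qed.

End Counting.

Lemma Tset_tuple s k (t : k.-tuple (letter s)) : ([ffun i => tnth t i] \in Tset s k) = reduced t.
Proof.
rewrite inE /reduced; congr andb.
  by apply/forallP/all_tnthP => h i; have := h i; rewrite ffunE.
apply/forallP/(sortedP (spin0 s)) => [h i|h j].
  rewrite size_tuple => ik; have ik' : (i < k)%N by lia.
  move/forallP/(_ (Ordinal ik))/implyP: (h (Ordinal ik')); rewrite /= eqxx !ffunE.
  by rewrite !(tnth_nth (spin0 s)); apply.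
apply/forallP => j'; apply/implyP => /eqP jj'; rewrite !ffunE !(tnth_nth (spin0 s)) jj'.
by apply: h; rewrite size_tuple -jj'.
Qed.

Lemma card_Tset s k : #|Tset s k| = nreduced s k.
Proof.
rewrite /nreduced sum_nat_of_bool -!sum1_card.
rewrite (reindex (fun t : k.-tuple (letter s) => [ffun i => tnth t i])) /=.
  by apply: eq_bigl => t; rewrite Tset_tuple.
exists (fun f : {ffun 'I_k -> letter s} => mktuple f) => [t _|f _].
  by apply: eq_from_tnth => i; rewrite tnth_mktuple ffunE.
by apply/ffunP => i; rewrite ffunE tnth_mktuple.
Qed.

Section WordMoves.

Variables (s n : nat) (T : Type) (f : seq (letter s) -> T).
Implicit Types (u v w r : seq (letter s)) (a b : letter s).
Local Notation o := (spin0 s).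

Hypothesis f_swap : forall u v a,
  (size u + size v).+2 = n -> f (u ++ [:: o; a] ++ v) = f (u ++ [:: a; o] ++ v).
Hypothesis f_cancel : forall u v a b, cancels a b ->
  (size u + size v).+2 = n -> f (u ++ [:: a; b] ++ v) = f (u ++ [:: o; o] ++ v).

Lemma move_zero_right r u v :
  (size u + size r + size v).+1 = n -> f (u ++ o :: r ++ v) = f (u ++ r ++ o :: v).
Proof.
elim: r u => [|c r IH] u /= sz; first by [].
rewrite -[o :: c :: _]/([:: o; c] ++ r ++ v) f_swap; last by rewrite size_cat; lia.
have -> : u ++ [:: c; o] ++ r ++ v = (u ++ [:: c]) ++ o :: r ++ v by rewrite -catA.
by rewrite IH -?catA // size_cat /=; lia.
Qed.

Lemma move_canonical w u : size u + size w = n -> f (u ++ w) = f (u ++ canonical w).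
Proof.
elim: w u => [|a w IH] u //= sz.
have -> : u ++ a :: w = (u ++ [:: a]) ++ w by rewrite -catA.
rewrite IH ?size_cat /=; last by lia.
rewrite -catA /=; have := size_nf w; rewrite /canonical nf_cons; case: ifP => na nf_le.
  case E: (nf w) nf_le => [|d r] /= nf_le; first by rewrite subn0 subn1.
  case: ifP => ad; last by rewrite subSS.
  set zs := nseq _ o; have zs_size : size zs = (size w - (size r).+1)%N by rewrite size_nseq.
  rewrite -[a :: _]/([:: a; d] ++ r ++ zs) f_cancel //; last by rewrite size_cat; lia.
  have -> : u ++ [:: o; o] ++ r ++ zs = (u ++ [:: o]) ++ o :: r ++ zs by rewrite -catA.
  rewrite move_zero_right -?catA /=; last by rewrite size_cat /=; lia.
  rewrite move_zero_right /=; last by lia.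
  by have -> : ((size w).+1 - size r = (size w - (size r).+1).+2)%N by lia.
have -> : a = o by apply/eqP; rewrite -spin_eq0; apply/negbFE.
by rewrite subSn // move_zero_right // size_nseq; lia.
Qed.

End WordMoves.

Section Configurations.

Variables s n : nat.
Implicit Types (x y : conf s n) (u v w : seq (letter s)) (a b c d : letter s).
Local Notation o := (spin0 s).

Definition word x : seq (letter s) := [seq x i | i <- enum 'I_n].

Definition conf_of w : conf s n := [ffun i : 'I_n => nth o w i].

Definition set_pair x p c d : conf s n :=
  [ffun i : 'I_n => if (i : nat) == p then c else if (i : nat) == p.+1 then d else x i].

Definition canon x : conf s n := conf_of (canonical (word x)).

Lemma size_word x : size (word x) = n.
Proof. by rewrite size_map size_enum_ord. Qed.

Lemma nth_word x (i : 'I_n) : nth o (word x) i = x i.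
Proof. by rewrite (nth_map i) ?size_enum_ord // nth_ord_enum. Qed.

Lemma wordK x : conf_of (word x) = x.
Proof. by apply/ffunP => i; rewrite ffunE nth_word. Qed.

Lemma conf_ofK w : size w = n -> word (conf_of w) = w.
Proof.
move=> wn; apply: (@eq_from_nth _ o); rewrite size_word // => i i_lt.
by rewrite (nth_word _ (Ordinal i_lt)) ffunE.
Qed.

Lemma word_inj : injective word.
Proof. by move=> x y xy; rewrite -(wordK x) xy wordK. Qed.

Lemma conf_of_cat u v a b c d : (size u + size v).+2 = n ->
  conf_of (u ++ [:: c; d] ++ v) = set_pair (conf_of (u ++ [:: a; b] ++ v)) (size u) c d.
Proof.
move=> sz; apply/ffunP => i; rewrite !ffunE !nth_cat.
case: ltnP => iu; first by rewrite !ltn_eqF // ltnS ltnW.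
case: eqP => [->|ne1]; first by rewrite subnn.
case: eqP => [->|ne2]; first by rewrite subSn // subnn.
by have -> : (i - size u = (i - size u - 2).+2)%N by lia.
Qed.

Lemma word_set_pair x p c d : (p.+1 < n)%N ->
  word (set_pair x p c d) = take p (word x) ++ [:: c; d] ++ drop p.+2 (word x).
Proof.
move=> pn; have sz : (size (take p (word x)) + size (drop p.+2 (word x))).+2 = n.
  by rewrite size_takel ?size_drop size_word; lia.
have split_p : word x = take p (word x) ++
    [:: nth o (word x) p; nth o (word x) p.+1] ++ drop p.+2 (word x).
  rewrite -[in LHS](cat_take_drop p (word x)); congr (_ ++ _).
  by rewrite (drop_nth o) ?(drop_nth o (n := p.+1)) ?size_word //; lia.
have -> : set_pair x p c d = set_pair (conf_of (take p (word x) ++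
    [:: nth o (word x) p; nth o (word x) p.+1] ++ drop p.+2 (word x))) (size (take p (word x))) c d.
  by rewrite -split_p wordK size_takel // size_word; lia.
rewrite -conf_of_cat // conf_ofK //.
by move: sz; rewrite !size_cat /=; lia.
Qed.

Lemma word_canon x : word (canon x) = canonical (word x).
Proof. by rewrite conf_ofK // size_canonical size_word. Qed.

Lemma canon_nf x y : nf (word x) = nf (word y) -> canon x = canon y.
Proof. by move=> xy; rewrite /canon /canonical xy !size_word. Qed.

Lemma canon_idem x : canon (canon x) = canon x.
Proof. by apply: canon_nf; rewrite word_canon nf_canonical. Qed.

Lemma nf_set_pair_swap x p a : (p.+1 < n)%N ->
  nf (word (set_pair x p o a)) = nf (word (set_pair x p a o)).
Proof. by move=> pn; rewrite !word_set_pair // !nf_cat /= nonzero_spin0. Qed.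

Lemma nf_set_pair_cancel x p a b : (p.+1 < n)%N -> cancels a b ->
  nf (word (set_pair x p a b)) = nf (word (set_pair x p o o)).
Proof.
move=> pn ab; have /andP[na nb] := cancels_nonzero ab.
rewrite !word_set_pair // /nf !filter_cat /= na nb nonzero_spin0.
by rewrite reduce_cat (reduce_cancel _ ab) -reduce_cat.
Qed.

Lemma set_pair_fst x (k : 'I_n) c d : set_pair x k c d k = c.
Proof. by rewrite ffunE eqxx. Qed.

Lemma set_pair_snd x (k k' : 'I_n) c d : k' = k.+1 :> nat -> set_pair x k c d k' = d.
Proof. by move=> kk'; rewrite ffunE kk' eqxx gtn_eqF. Qed.

Lemma set_pair_idem x p c d c' d' : set_pair (set_pair x p c d) p c' d' = set_pair x p c' d'.
Proof. by apply/ffunP => i; rewrite !ffunE; case: (i == p :> nat); case: (i == p.+1 :> nat). Qed.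

Definition agree x y (k k' : 'I_n) : bool :=
  [forall l : 'I_n, ((l != k) && (l != k')) ==> (x l == y l)].

Lemma agree_sym x y k k' : agree x y k k' = agree y x k k'.
Proof.
by apply/forallP/forallP => xy l; [rewrite (eq_sym (y l)) | rewrite (eq_sym (x l))]; apply: xy.
Qed.

Lemma set_pair_eq x y (k k' : 'I_n) c d : k' = k.+1 :> nat ->
  (y == set_pair x k c d) = [&& agree x y k k', y k == c & y k' == d].
Proof.
move=> kk'; apply/eqP/and3P => [->|[/forallP xy /eqP yk /eqP yk']].
  rewrite set_pair_fst set_pair_snd //; split=> //; apply/forallP => l.
  by apply/implyP => /andP[lk lk']; rewrite ffunE -kk' !(inj_eq val_inj) (negbTE lk) (negbTE lk').
apply/ffunP => l; rewrite ffunE -kk' !(inj_eq val_inj).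
case: eqP => [->|lk] //; case: eqP => [->|lk'] //.
by apply/esym/eqP/(implyP (xy l)); apply/andP; split; apply/eqP.
Qed.

End Configurations.

Section MoveInvariance.

Variables s n : nat.
Local Notation o := (spin0 s).

Definition move_invariant (F : conf s n -> algC) :=
  (forall x p a, (p.+1 < n)%N -> F (set_pair x p o a) = F (set_pair x p a o)) /\
  (forall x p a b, (p.+1 < n)%N -> cancels a b -> F (set_pair x p a b) = F (set_pair x p o o)).

Lemma move_invariantP F : move_invariant F <-> forall x, F x = F (canon x).
Proof.
split=> [[F_swap F_cancel] x | F_canon]; last first.
  split=> [x p a pn | x p a b pn ab]; rewrite F_canon [RHS]F_canon; congr F; apply: canon_nf.
    exact: nf_set_pair_swap.
  exact: nf_set_pair_cancel.
have := @move_canonical s n _ (fun w => F (conf_of n w)) _ _ (word x) [::].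
rewrite wordK size_word; apply=> // [u v a | u v a b ab] sz.
  by rewrite (conf_of_cat o a o a) // (conf_of_cat o a a o) // F_swap // -sz; lia.
by rewrite (conf_of_cat a b a b) // (conf_of_cat a b o o) // F_cancel // -sz; lia.
Qed.

End MoveInvariance.

Lemma map_nth_enum_ord (T : Type) (z : T) (w : seq T) k : (k <= size w)%N ->
  [seq nth z w i | i : 'I_k <- enum 'I_k] = take k w.
Proof.
move=> kw; apply: (@eq_from_nth _ z); first by rewrite size_map size_enum_ord size_takel.
move=> i; rewrite size_map size_enum_ord => ik.
by rewrite (nth_map (Ordinal ik)) ?size_enum_ord // nth_enum_ord // nth_take.
Qed.

Section CanonicalCount.

Variables s n : nat.
Implicit Types (x : conf s n).
Local Notation o := (spin0 s).

Lemma canon_fixedE x : (canon x == x) = (word x == canonical (word x)).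
Proof. by rewrite -word_canon eq_sym (inj_eq (@word_inj s n)). Qed.

Lemma nreduced_canon_size k : (k <= n)%N ->
  nreduced s k = #|[pred x : conf s n | (canon x == x) && (size (nf (word x)) == k)]|.
Proof.
move=> kn; rewrite /nreduced sum_nat_of_bool -!sum1_card.
pose pad (t : k.-tuple (letter s)) := conf_of n (val t ++ nseq (n - k) o).
pose prefix (x : conf s n) := [tuple nth o (word x) i | i < k].
have word_pad t : word (pad t) = val t ++ nseq (n - k) o.
  by rewrite conf_ofK // size_cat size_tuple size_nseq; lia.
rewrite (reindex_onto pad prefix) /=; last first.
  move=> x; rewrite !inE canon_fixedE => /andP[/eqP fx /eqP sx]; apply: word_inj.
  by rewrite word_pad /= map_nth_enum_ord ?size_word // fx /canonical -sx take_size_cat // size_word.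
apply: eq_bigl => t; rewrite !inE canon_fixedE.
have -> : prefix (pad t) == t.
  apply/eqP/val_inj; rewrite /= map_nth_enum_ord word_pad ?take_size_cat ?size_tuple //.
  by rewrite leq_addr.
have nf_pad : nf (word (pad t)) = nf t by rewrite word_pad nf_nseq0.
rewrite andbT nf_pad unfold_in /canonical nf_pad word_pad size_cat size_tuple size_nseq.
apply/idP/andP => [rt | [/eqP fixed /eqP sz]].
  by rewrite nf_id // size_tuple addKn !eqxx.
suff -> : val t = nf t by apply: reduced_nf.
by move/eqP: fixed; rewrite eqseq_cat ?size_tuple ?sz // => /andP[/eqP].
Qed.

Lemma card_canon_fixed :
  #|[pred x : conf s n | canon x == x]| = (\sum_(k < n.+1) nreduced s k)%N.
Proof.
under eq_bigr => k _ do rewrite (nreduced_canon_size (ltnSE (ltn_ord k))) -sum_nat_of_bool.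
rewrite -sum_nat_of_bool exchange_big; apply: eq_bigr => x _ /=.
have nf_lt : (size (nf (word x)) < n.+1)%N by rewrite ltnS -[X in (_ <= X)%N](size_word x) size_nf.
rewrite (bigD1 (Ordinal nf_lt)) //= eqxx andbT big1 ?addn0 // => k /negbTE k_ne.
suff -> : (size (nf (word x)) == k) = false by rewrite andbF.
by apply: contraFF k_ne => /eqP e; apply/eqP/val_inj; rewrite /= e.
Qed.

End CanonicalCount.

Lemma sum_enum_val (R : nmodType) (T : finType) (G : T -> R) :
  \sum_(j < #|T|) G (enum_val j) = \sum_x G x.
Proof.
rewrite [RHS](reindex (@enum_val T predT)) //.
by exists enum_rank => [j _|x _]; rewrite ?enum_valK ?enum_rankK.
Qed.

Section RetractionKernel.

Variables (F : fieldType) (T : finType) (m : nat) (A : 'M[F]_(#|T|, m)) (r : T -> T).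
Hypothesis r_idem : forall x, r (r x) = r x.
Hypothesis kerA : forall u : 'rV[F]_#|T|,
  u *m A = 0 <-> forall x, u 0 (enum_rank x) = u 0 (enum_rank (r x)).

Local Notation R := [pred x | r x == x].
Let rep (i : 'I_#|R|) : T := enum_val i.

Let rep_fixed i : r (rep i) = rep i.
Proof. by have := enum_valP i; rewrite inE => /eqP. Qed.

Let fibres : 'M[F]_(#|R|, #|T|) := \matrix_(i, j) (r (enum_val j) == rep i)%:R.
Let reps : 'M[F]_(#|T|, #|R|) := \matrix_(j, i) (enum_val j == rep i)%:R.

Let fibres_reps : fibres *m reps = 1%:M.
Proof.
apply/matrixP => i i'; rewrite !mxE.
under eq_bigr do rewrite !mxE.
rewrite (sum_enum_val (fun x => (r x == rep i)%:R * (x == rep i')%:R)).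
rewrite (bigD1 (rep i')) //= eqxx mulr1 big1 ?addr0 => [|x /negbTE->]; last by rewrite mulr0.
by rewrite rep_fixed (inj_eq enum_val_inj) eq_sym.
Qed.

Let rank_fibres : \rank fibres = #|R|.
Proof.
apply/eqP; rewrite eqn_leq rank_leq_row /=.
by have := mxrankM_maxl fibres reps; rewrite fibres_reps mxrank1.
Qed.

Let fibres_ker : (fibres <= kermx A)%MS.
Proof.
apply/sub_kermxP/row_matrixP => i; rewrite row_mul row0; apply/kerA => x.
by rewrite !mxE !enum_rankK r_idem.
Qed.

Let fibres_span (u : 'rV[F]_#|T|) : (forall x, u 0 (enum_rank x) = u 0 (enum_rank (r x))) ->
  u = (\row_i u 0 (enum_rank (rep i))) *m fibres.
Proof.
move=> u_r; apply/rowP => j; rewrite [RHS]mxE.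
under eq_bigr do rewrite /fibres !mxE.
have r_fixed x : r x \in R by rewrite inE r_idem.
set x := enum_val j; pose i0 := enum_rank_in (r_fixed x) (r x).
have rep_i0 : rep i0 = r x by rewrite /rep enum_rankK_in.
rewrite (bigD1 i0) //= rep_i0 eqxx mulr1 -u_r enum_valK big1 ?addr0 // => i i_ne.
by rewrite -rep_i0 (inj_eq enum_val_inj) eq_sym (negbTE i_ne) mulr0.
Qed.

Lemma rank_kermx_retraction : \rank (kermx A) = #|R|.
Proof.
apply/eqP; rewrite eqn_leq -rank_fibres (mxrankS fibres_ker) andbT.
apply/mxrankS/row_subP => k; apply/submxP; eexists; apply: fibres_span; apply/kerA.
by rewrite -row_mul mulmx_ker row0.
Qed.

End RetractionKernel.

Lemma sum_pick2 (R : pzSemiRingType) (I J : finType) (G : I -> J -> R) a b :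
  \sum_i \sum_j ((i == a) && (j == b))%:R * G i j = G a b.
Proof.
rewrite (bigD1 a) //= [X in _ + X]big1 ?addr0 => [|i /negbTE ia]; last first.
  by rewrite big1 // => j _; rewrite ia mul0r.
rewrite (bigD1 b) //= !eqxx mul1r [X in _ + X]big1 ?addr0 // => j /negbTE jb.
by rewrite jb andbF mul0r.
Qed.

Section LocalStates.

Variable s : nat.
Implicit Types (c d : letter s) (G : letter s -> letter s -> algC).
Local Notation o := (spin0 s).

Definition isqrt2 : algC := (sqrtC 2)^-1.

Definition philoc (i : letter s) c d := phiv (spin i) (spin c) (spin d).
Definition chiloc (j : 'I_s) c d := chiv (j.+1)%:Z (spin c) (spin d).

Lemma isqrt2_real : isqrt2^* = isqrt2.
Proof. by apply/CrealP; rewrite rpredV sqrtC_real ?ler0n. Qed.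

Lemma isqrt2_neq0 : isqrt2 != 0.
Proof. by rewrite invr_eq0 sqrtC_eq0 pnatr_eq0. Qed.

Lemma sum_philoc_conj i G :
  \sum_c \sum_d (philoc i c d)^* * G c d = isqrt2 * (G o i - G i o).
Proof.
under eq_bigr do under eq_bigr do
  rewrite /philoc /phiv rmorphM rmorphB /= !conjC_nat isqrt2_real -/isqrt2
          !spin_eq0 !(inj_eq (@spin_inj s)) -mulrA mulrBl.
under eq_bigr do rewrite -mulr_sumr sumrB.
by rewrite -mulr_sumr sumrB !sum_pick2.
Qed.

Lemma sum_chiloc_conj j G :
  \sum_c \sum_d (chiloc j c d)^* * G c d
    = isqrt2 * (G o o - G (pos_letter j) (opp_letter (pos_letter j))).
Proof.
have e1 : (j.+1)%:Z = spin (pos_letter j) by rewrite spin_pos_letter.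
have e2 : - (j.+1)%:Z = spin (opp_letter (pos_letter j)) by rewrite spin_opp_letter spin_pos_letter.
under eq_bigr do under eq_bigr do
  rewrite /chiloc /chiv rmorphM rmorphB /= !conjC_nat isqrt2_real -/isqrt2 e2 e1
          !spin_eq0 !(inj_eq (@spin_inj s)) -mulrA mulrBl.
under eq_bigr do rewrite -mulr_sumr sumrB.
by rewrite -mulr_sumr sumrB !sum_pick2.
Qed.

End LocalStates.

Section Hamiltonian.

Variables s n : nat.
Implicit Types (x y : conf s n) (F G : conf s n -> algC) (v : letter s -> letter s -> algC).
Local Notation o := (spin0 s).

Lemma sum_agree x (k k' : 'I_n) G : k' = k.+1 :> nat ->
  \sum_y (agree x y k k')%:R * G y = \sum_c \sum_d G (set_pair x k c d).
Proof.
move=> kk'; under eq_bigr do rewrite mulr_natl mulrb; rewrite -big_mkcond pair_big /=.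
rewrite (reindex_onto (fun cd => set_pair x k cd.1 cd.2) (fun y => (y k, y k'))) /=.
  apply: eq_bigl => -[c d]; rewrite set_pair_fst (set_pair_snd _ _ _ kk') eqxx andbT.
  by have := set_pair_eq x (set_pair x k c d) c d kk'; rewrite eqxx => /esym/and3P[].
by move=> y xy; apply/esym/eqP; rewrite (set_pair_eq _ _ _ _ kk') xy !eqxx.
Qed.

Lemma sum_by_zero_pair (k k' : 'I_n) G : k' = k.+1 :> nat ->
  \sum_x G x = \sum_(x : conf s n) ((x k == o) && (x k' == o))%:R * \sum_c \sum_d G (set_pair x k c d).
Proof.
move=> kk'; under [RHS]eq_bigr do rewrite -(sum_agree _ _ kk') mulr_sumr.
rewrite [RHS]exchange_big; apply: eq_bigr => y _ /=.
under eq_bigr => x _ do rewrite mulrA -natrM mulnb andbC agree_sym -(set_pair_eq _ _ _ _ kk').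
rewrite (bigD1 (set_pair y k o o)) //= eqxx mul1r big1 ?addr0 // => x /negbTE->.
by rewrite mul0r.
Qed.

(* [amp k v F x] is <v| on the sites (k, k+1) applied to [F], the other sites fixed as in [x]. *)
Definition amp (k : 'I_n) v F x := \sum_c \sum_d (v c d)^* * F (set_pair x k c d).

Lemma amp_set_pair k v F x c d : amp k v F (set_pair x k c d) = amp k v F x.
Proof. by apply: eq_bigr => c' _; apply: eq_bigr => d' _; rewrite set_pair_idem. Qed.

Definition Hterm (k k' : 'I_n) F x :=
  \sum_(i | spin i != 0) philoc i (x k) (x k') * amp k (@philoc s i) F x
  + \sum_(j < s) chiloc j (x k) (x k') * amp k (@chiloc s j) F x.

Lemma Hentry_mulE x F :
  \sum_y Hentry x y * F y = \sum_(k : 'I_n) \sum_(k' : 'I_n | k' == k.+1 :> nat) Hterm k k' F x.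
Proof.
rewrite /Hentry; under eq_bigr do rewrite mulr_suml.
under eq_bigr do under eq_bigr do rewrite mulr_suml.
rewrite exchange_big; apply: eq_bigr => k _; rewrite exchange_big; apply: eq_bigr => k' /eqP kk'.
under eq_bigr do rewrite -mulrA.
rewrite (sum_agree _ (fun y => hloc s _ _ (spin (y k)) (spin (y k')) * F y) kk') /=.
under eq_bigr do under eq_bigr do rewrite set_pair_fst (set_pair_snd _ _ _ kk') /hloc mulrDl !mulr_suml.
rewrite /Hterm /amp.
under [in RHS]eq_bigr do rewrite mulr_sumr.
under [X in _ = _ + X]eq_bigr do rewrite mulr_sumr.
rewrite [X in _ = X + _]exchange_big [X in _ = _ + X]exchange_big -big_split /=.
apply: eq_bigr => c _.
under [X in _ = X + _]eq_bigr do rewrite mulr_sumr.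
under [X in _ = _ + X]eq_bigr do rewrite mulr_sumr.
rewrite [X in _ = X + _]exchange_big [X in _ = _ + X]exchange_big -big_split /=.
by apply: eq_bigr => d _; congr (_ + _); apply: eq_bigr => i _; rewrite mulrA.
Qed.

Lemma Hterm_invariant (k k' : 'I_n) F x : k' = k.+1 :> nat ->
  move_invariant F -> Hterm k k' F x = 0.
Proof.
move=> kk' [F_swap F_cancel]; have kn : (k.+1 < n)%N by rewrite -kk'.
rewrite /Hterm /amp.
rewrite big1 ?add0r => [|i _]; last by rewrite sum_philoc_conj F_swap // subrr !mulr0.
by rewrite big1 // => j _; rewrite sum_chiloc_conj F_cancel ?cancels_pos_letter // subrr !mulr0.
Qed.

Definition pair_weight (k k' : 'I_n) v F :=
  \sum_(x : conf s n) ((x k == o) && (x k' == o))%:R * (amp k v F x * (amp k v F x)^*).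

Lemma pair_weight_ge0 k k' v F : 0 <= pair_weight k k' v F.
Proof. by apply: sumr_ge0 => x _; rewrite mulr_ge0 ?ler0n ?mul_conjC_ge0. Qed.

Lemma pair_weight_eq0 (k k' : 'I_n) v F : k' = k.+1 :> nat ->
  pair_weight k k' v F = 0 -> forall x, amp k v F x = 0.
Proof.
move=> kk' /psumr_eq0P w0 x; rewrite -(amp_set_pair k v F x o o).
have := w0 (fun y _ => mulr_ge0 (ler0n _ _) (mul_conjC_ge0 _)) (set_pair x k o o) isT.
by rewrite set_pair_fst (set_pair_snd _ _ _ kk') eqxx mul1r => /eqP; rewrite mul_conjC_eq0 => /eqP.
Qed.

Lemma sum_amp_sqr (k k' : 'I_n) v F : k' = k.+1 :> nat ->
  \sum_x (F x)^* * (v (x k) (x k') * amp k v F x) = pair_weight k k' v F.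
Proof.
move=> kk'; rewrite (sum_by_zero_pair _ kk'); apply: eq_bigr => x _; congr (_ * _).
under eq_bigr do under eq_bigr do rewrite set_pair_fst (set_pair_snd _ _ _ kk') amp_set_pair.
rewrite {3}/amp rmorph_sum /= mulr_sumr; apply: eq_bigr => c _.
rewrite rmorph_sum /= mulr_sumr; apply: eq_bigr => d _.
by rewrite rmorphM /= conjCK; ring.
Qed.

Definition local_weight (k k' : 'I_n) F :=
  \sum_(i | spin i != 0) pair_weight k k' (@philoc s i) F
  + \sum_(j < s) pair_weight k k' (@chiloc s j) F.

Lemma local_weight_ge0 k k' F : 0 <= local_weight k k' F.
Proof. by rewrite addr_ge0 ?sumr_ge0 // => *; apply: pair_weight_ge0. Qed.

Lemma Hentry_form F :
  \sum_x (F x)^* * \sum_y Hentry x y * F y =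
  \sum_(k : 'I_n) \sum_(k' : 'I_n | k' == k.+1 :> nat) local_weight k k' F.
Proof.
under eq_bigr do rewrite Hentry_mulE mulr_sumr.
rewrite exchange_big; apply: eq_bigr => k _.
under eq_bigr do rewrite mulr_sumr.
rewrite exchange_big; apply: eq_bigr => k' /eqP kk'.
under eq_bigr do rewrite mulrDr !mulr_sumr.
rewrite big_split /= [X in X + _]exchange_big [X in _ + X]exchange_big /=.
by congr (_ + _); apply: eq_bigr => i _; apply: sum_amp_sqr.
Qed.

Lemma kernel_local_weight F (k k' : 'I_n) : (forall x, \sum_y Hentry x y * F y = 0) ->
  k' = k.+1 :> nat -> local_weight k k' F = 0.
Proof.
move=> HF0 kk'.
have sum0 : \sum_(k : 'I_n) \sum_(k' : 'I_n | k' == k.+1 :> nat) local_weight k k' F = 0.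
  by rewrite -Hentry_form big1 // => x _; rewrite HF0 mulr0.
have row_ge0 (k0 : 'I_n) (_ : true) :
    0 <= \sum_(k' : 'I_n | k' == k0.+1 :> nat) local_weight k0 k' F.
  by apply: sumr_ge0 => *; apply: local_weight_ge0.
have := psumr_eq0P row_ge0 sum0 (i := k) isT.
by move/psumr_eq0P; apply=> [k'' _|]; [apply: local_weight_ge0 | apply/eqP].
Qed.

Lemma local_weight_eq0 (k k' : 'I_n) F : k' = k.+1 :> nat -> local_weight k k' F = 0 ->
  (forall i, spin i != 0 -> forall x, amp k (@philoc s i) F x = 0) /\
  (forall j x, amp k (@chiloc s j) F x = 0).
Proof.
move=> kk' /eqP; rewrite paddr_eq0 ?sumr_ge0 // => [/andP[/eqP phi0 /eqP chi0]|*|*];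
  try exact: pair_weight_ge0.
split=> [i i_nz|j]; apply: (pair_weight_eq0 kk').
  exact: (psumr_eq0P (fun i _ => pair_weight_ge0 _ _ _ _) phi0).
exact: (psumr_eq0P (fun i _ => pair_weight_ge0 _ _ _ _) chi0).
Qed.

Lemma Hentry_kernelP F : (forall x, \sum_y Hentry x y * F y = 0) <-> move_invariant F.
Proof.
split=> [HF0|Finv x]; last first.
  rewrite Hentry_mulE big1 // => k _; rewrite big1 // => k' /eqP kk'.
  exact: Hterm_invariant.
have amp0 p (pn : (p.+1 < n)%N) :=
  let kk' : Ordinal pn = (Ordinal (ltnW pn)).+1 :> nat := erefl in
  local_weight_eq0 kk' (kernel_local_weight HF0 kk').
split=> [x p a pn | x p a b pn ab].
  have [/eqP|a_nz] := eqVneq (spin a) 0; first by rewrite spin_eq0 => /eqP->.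
  have [/(_ a a_nz x) /eqP] := amp0 p pn.
  by rewrite /amp sum_philoc_conj mulf_eq0 (negbTE isqrt2_neq0) subr_eq0 => /eqP.
have [j [-> ->]] := cancelsP ab.
have [_ /(_ j x) /eqP] := amp0 p pn.
by rewrite /amp sum_chiloc_conj mulf_eq0 (negbTE isqrt2_neq0) subr_eq0 => /eqP.
Qed.

End Hamiltonian.

Section Kernel.

Variables s n : nat.
Implicit Types (x y : conf s n) (u : 'rV[algC]_#|conf s n|).

Lemma mulmx_trHmatE u x :
  (u *m (Hmat s n)^T) 0 (enum_rank x) = \sum_y Hentry x y * u 0 (enum_rank y).
Proof.
rewrite mxE -(sum_enum_val (fun y => Hentry x y * u 0 (enum_rank y))).
by apply: eq_bigr => j _; rewrite !mxE enum_rankK enum_valK mulrC.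
Qed.

Lemma Hmat_kernelP u :
  u *m (Hmat s n)^T = 0 <-> forall x, u 0 (enum_rank x) = u 0 (enum_rank (canon x)).
Proof.
rewrite -(move_invariantP (fun x => u 0 (enum_rank x))) -Hentry_kernelP.
split=> [u0 x | u0]; first by rewrite -mulmx_trHmatE u0 mxE.
by apply/rowP => j; rewrite -[j]enum_valK mulmx_trHmatE u0 mxE.
Qed.

Lemma dimker_canon : dimker s n = #|[pred x : conf s n | canon x == x]|.
Proof. exact: rank_kermx_retraction (@canon_idem s n) Hmat_kernelP. Qed.

End Kernel.

Unset Implicit Arguments.

Theorem corollary1 (s : nat) (hs : (2 <= s)%N) :
  (forall n : nat, (1 <= n)%N ->
     dimker s n = (\sum_(k < n.+1) #|Tset s k|)%N /\
     ((\sum_(k < n.+1) #|Tset s k|)%N%:R : algC)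
       = (rplus s ^+ n.+1 + rminus s ^+ n.+1 - 2) / (2 * (s%:R - 1)))
  /\
  (forall eps : algC, 0 < eps -> exists N : nat, forall n : nat, (N <= n)%N ->
     `| (dimker s n)%:R / (rplus s ^+ n.+1 / (2 * (s%:R - 1))) - 1 | < eps).
Proof.
have dimker_sum n : dimker s n = (\sum_(k < n.+1) #|Tset s k|)%N.
  by rewrite dimker_canon card_canon_fixed; apply: eq_bigr => k _; rewrite card_Tset.
have closed_form n : ((\sum_(k < n.+1) #|Tset s k|)%N%:R : algC)
    = (rplus s ^+ n.+1 + rminus s ^+ n.+1 - 2) / (2 * (s%:R - 1)).
  under eq_bigr do rewrite card_Tset.
  exact: sum_linrec2_closed_form hs _ (nreduced0 s) (nreduced1 s) (nreduced_rec s) n.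
split=> [n _|eps eps0]; first by rewrite dimker_sum closed_form.
have [N HN] := closed_form_ratio_cvg hs eps0.
by exists N => n Nn; rewrite dimker_sum closed_form; apply: HN.
Qed.
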